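(* The function $h_1(t)=\dfrac{\log^2(1+t)}{\log(1+t^2)}$ is strictly decreasing on $(0,1)$ and strictly increasing on $(1,\infty)$. In particular, $\log^2(1+t)\le\log(1+t^2)$ for $0<t\le1$. *)

From Stdlib Require Import Reals.
Open Scope R_scope.

Definition h1 (t : R) : R := (ln (1 + t)) ^ 2 / ln (1 + t ^ 2).

(* Write psi(x) = (1+x) log(1+x) / x, which is increasing on (0, oo) because
   its derivative is (x - log(1+x)) / x^2 > 0.  Differentiating h_1 gives
     h_1'(t) = w(t) (psi(t^2) - psi(t))   with w(t) > 0 for t > 0,
   so h_1' has the sign of t^2 - t.  The inequality for t <= 1 comes from
   log(1+t^2) - log^2(1+t), which vanishes at 0 and has derivative
   2t/(1+t^2) - 2 log(1+t)/(1+t) > 0 on (0,1), since there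
   log(1+t) < t <= t(1+t)/(1+t^2). *)

From Stdlib Require Import Reals Lra Lia.
From Coquelicot Require Import Coquelicot.
Open Scope R_scope.

Lemma lt_of_is_derive_pos (f f' : R -> R) (a b : R) :
  a < b -> (forall c, a <= c <= b -> is_derive f c (f' c)) ->
  (forall c, a < c < b -> 0 < f' c) -> f a < f b.
Proof.
  intros Hab Hder Hpos.
  destruct (MVT_cor2 f f' a b Hab) as [c [Hdiff Hc]].
  { intros c Hc; apply is_derive_Reals; auto. }
  assert (0 < f' c * (b - a)) by (apply Rmult_lt_0_compat; [apply Hpos; auto | lra]).
  lra.
Qed.

Lemma lt_of_is_derive_neg (f f' : R -> R) (a b : R) :
  a < b -> (forall c, a <= c <= b -> is_derive f c (f' c)) ->
  (forall c, a < c < b -> f' c < 0) -> f b < f a.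
Proof.
  intros Hab Hder Hneg.
  enough (- f a < - f b) by lra.
  apply (lt_of_is_derive_pos (fun x => - f x) (fun x => - f' x) a b Hab).
  - intros c Hc; apply (is_derive_opp f c (f' c)), Hder; auto.
  - intros c Hc; specialize (Hneg c Hc); lra.
Qed.

Lemma ln_1p_lt x : 0 < x -> ln (1 + x) < x.
Proof.
  intros Hx. rewrite <- (ln_exp x) at 2.
  apply ln_increasing; [lra|]. apply exp_ineq1; lra.
Qed.

Lemma ln_gt0 x : 1 < x -> 0 < ln x.
Proof. intros H. rewrite <- ln_1. apply ln_increasing; lra. Qed.

Definition psi (x : R) : R := (1 + x) * ln (1 + x) / x.

Lemma psi_increasing a b : 0 < a -> a < b -> psi a < psi b.
Proof.
  intros Ha Hab.
  apply (lt_of_is_derive_pos psi (fun x => (x - ln (1 + x)) / x ^ 2)); auto.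
  - intros c Hc. unfold psi. auto_derive.
    + repeat split; lra.
    + field. lra.
  - intros c Hc. apply Rdiv_lt_0_compat.
    + pose proof (ln_1p_lt c); lra.
    + apply pow_lt; lra.
Qed.

Definition h1_weight (t : R) : R :=
  2 * ln (1 + t) * t ^ 2 / ((1 + t) * (1 + t ^ 2) * ln (1 + t ^ 2) ^ 2).

Lemma h1_weight_pos t : 0 < t -> 0 < h1_weight t.
Proof.
  intros Ht. unfold h1_weight.
  assert (0 < t ^ 2) by (apply pow_lt; lra).
  assert (0 < ln (1 + t)) by (apply ln_gt0; lra).
  assert (0 < ln (1 + t ^ 2)) by (apply ln_gt0; lra).
  apply Rdiv_lt_0_compat; [nra|].
  apply Rmult_lt_0_compat; [nra|]. apply pow_lt; lra.
Qed.

Lemma is_derive_h1 t :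
  0 < t -> is_derive h1 t (h1_weight t * (psi (t ^ 2) - psi t)).
Proof.
  intros Ht. unfold h1, h1_weight, psi.
  assert (0 < t ^ 2) by (apply pow_lt; lra).
  assert (0 < ln (1 + t ^ 2)) by (apply ln_gt0; lra).
  auto_derive.
  - repeat split; try nra. simpl in *. lra.
  - simpl in *. field. repeat split; nra.
Qed.

Lemma h1_decreasing s t : 0 < s -> s < t -> t < 1 -> h1 t < h1 s.
Proof.
  intros Hs Hst Ht.
  apply (lt_of_is_derive_neg h1 (fun c => h1_weight c * (psi (c ^ 2) - psi c)));
    auto.
  - intros c Hc; apply is_derive_h1; lra.
  - intros c Hc. apply Rmult_pos_neg; [apply h1_weight_pos; lra|].
    assert (psi (c ^ 2) < psi c) by (apply psi_increasing; simpl; nra).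
    lra.
Qed.

Lemma h1_increasing s t : 1 < s -> s < t -> h1 s < h1 t.
Proof.
  intros Hs Hst.
  apply (lt_of_is_derive_pos h1 (fun c => h1_weight c * (psi (c ^ 2) - psi c)));
    auto.
  - intros c Hc; apply is_derive_h1; lra.
  - intros c Hc. apply Rmult_lt_0_compat; [apply h1_weight_pos; lra|].
    assert (psi c < psi (c ^ 2)) by (apply psi_increasing; simpl; nra).
    lra.
Qed.

Lemma sqr_ln_1p_lt_ln_1p_sqr t :
  0 < t <= 1 -> ln (1 + t) ^ 2 < ln (1 + t ^ 2).
Proof.
  intros [Ht Ht1].
  pose (g x := ln (1 + x ^ 2) - ln (1 + x) ^ 2).
  assert (Hg0 : g 0 = 0).
  { unfold g. rewrite Rplus_0_r, pow_i, Rplus_0_r, ln_1 by lia. ring. }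
  enough (g 0 < g t) by (unfold g in *; lra).
  apply (lt_of_is_derive_pos g
           (fun x => 2 * x / (1 + x ^ 2) - 2 * ln (1 + x) / (1 + x))); auto.
  - intros c Hc. unfold g. auto_derive.
    + repeat split; nra.
    + field. nra.
  - intros c Hc.
    assert (ln (1 + c) < c) by (apply ln_1p_lt; lra).
    assert (ln (1 + c) * (1 + c ^ 2) < c * (1 + c)) by (simpl; nra).
    replace (2 * c / (1 + c ^ 2) - 2 * ln (1 + c) / (1 + c))
      with (2 * (c * (1 + c) - ln (1 + c) * (1 + c ^ 2)) / ((1 + c) * (1 + c ^ 2)))
      by (field; simpl; nra).
    apply Rdiv_lt_0_compat; simpl in *; nra.
Qed.

Theorem lemma3p7 :
  (forall s t : R, 0 < s -> s < t -> t < 1 -> h1 t < h1 s) /\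
  (forall s t : R, 1 < s -> s < t -> h1 s < h1 t) /\
  (forall t : R, 0 < t <= 1 -> (ln (1 + t)) ^ 2 <= ln (1 + t ^ 2)).
Proof.
  split; [exact h1_decreasing|split; [exact h1_increasing|]].
  intros t Ht. apply Rlt_le, sqr_ln_1p_lt_ln_1p_sqr, Ht.
Qed.
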